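(* Fix integers $d,k\ge0$ and $n\ge1$, and let $f:\mathfrak{S}_n\to\mathbb{R}$ be a (real) linear combination of indicators $1_{IJ}$ with each partial permutation $(I,J)$ of size at most $k$. Then for $\lambda\vdash n$, $\mathbb{E}_\lambda[f^d]$ depends on $\lambda$ only through $m_1(\lambda),m_2(\lambda),\dots,m_{kd}(\lambda)$. In particular, if $m_i(\lambda)=0$ for all $i\in[kd]$ (and $kd<n$ is not required), then $\mathbb{E}_\lambda[f^d]=\mathbb{E}_{(n)}[f^d]$, where $(n)$ denotes the partition with a single part $n$.
   Context: A partial permutation of size $k$ in $\mathfrak{S}_n$ is a pair $(I,J)$ of $k$-tuples $I=(i_1,\dots,i_k)$, $J=(j_1,\dots,j_k)$, each with distinct entries in $[n]$; $1_{IJ}(\pi)=1$ if $\pi(i_\ell)=j_\ell$ for all $\ell$ and $0$ otherwise. For $\lambda\vdash n$, $\mathbb{E}_\lambda$ is expectation under the uniform distribution on permutations of cycle type $\lambda$, and $m_i(\lambda)$ is the number of parts of $\lambda$ equal to $i$. *)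

From mathcomp Require Import all_boot all_order all_algebra all_fingroup.
Set Implicit Arguments. Unset Strict Implicit. Unset Printing Implicit Defensive.
Import Order.TTheory GRing.Theory Num.Theory.
Local Open Scope ring_scope.

Definition partial_perm (n k : nat) (IJ : seq 'I_n * seq 'I_n) : bool :=
  [&& size IJ.1 == k, size IJ.2 == k, uniq IJ.1 & uniq IJ.2].

Definition ind_pp (R : nzRingType) (n : nat) (IJ : seq 'I_n * seq 'I_n)
    (pi : {perm 'I_n}) : R :=
  (all (fun ij : 'I_n * 'I_n => pi ij.1 == ij.2) (zip IJ.1 IJ.2))%:R.

Definition lin_comb_pp (R : nzRingType) (n k : nat) (f : {perm 'I_n} -> R) : Prop :=
  exists s : seq (R * (seq 'I_n * seq 'I_n)),
    (forall t, t \in s -> exists2 l, (l <= k)%N & partial_perm l t.2) /\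
    forall pi, f pi = \sum_(t <- s) t.1 * ind_pp R t.2 pi.

Definition is_partition (n : nat) (la : seq nat) : bool :=
  [&& sorted geq la, all (fun x => 0 < x)%N la & sumn la == n].

(* cycle type of a permutation (including fixed points as 1-cycles) *)
Definition cycle_type (n : nat) (pi : {perm 'I_n}) : seq nat :=
  sort geq [seq #|c| | c : {set 'I_n} <- enum (porbits pi)].

Definition mult (i : nat) (la : seq nat) : nat := count_mem i la.

Definition Exp_ct (R : fieldType) (n : nat) (la : seq nat)
    (g : {perm 'I_n} -> R) : R :=
  (\sum_(pi : {perm 'I_n} | cycle_type pi == la) g pi)
    / (#|[set pi : {perm 'I_n} | cycle_type pi == la]|)%:R.

From mathcomp Require Import all_boot all_order all_algebra all_fingroup.
Set Implicit Arguments. Unset Strict Implicit. Unset Printing Implicit Defensive.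
Import GRing.Theory Num.Theory.

(* Expanding [f ^+ d], it is a combination of indicators [extends p A] of
   partial maps [A] with at most [k d] edges.  Summing such an indicator over
   the conjugates of [p] gives the number [nembeds p A] of permutations [s]
   with [p (s x) = s y] for every edge [(x, y)] of [A], and the point is that
   this number only depends on the numbers [cyc_pts p c] of points on
   [c]-cycles of [p] for [c <= #|A|].  If [A] has an edge [(u, v)] whose end
   [v] starts no edge, sorting the solutions for [A] minus that edge by the
   image of [u] relates [nembeds p A] to relations of smaller support.
   Otherwise [A] is the graph of a permutation [t] of its domain, and an
   [s] is built one cycle of [t] at a time: a [c]-cycle through [u] is mapped
   onto a [c]-cycle of [p] not yet used, determined by the image of [u],
   which leaves [cyc_pts p c] minus the points already used as choices. *)

Section PermCounting.
Variable T : finType.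

Lemma perm_extend (S : {set T}) (F : T -> T) :
  {in S &, injective F} -> exists p : {perm T}, {in S, p =1 F}.
Proof.
move: {2}#|S| (leqnn #|S|) => m; elim: m S => [|m IH] S.
  rewrite leqn0 cards_eq0 => /eqP -> _; exists 1%g => x; by rewrite inE.
move=> leSm injF; case: (set_0Vmem S) => [-> | [x xS]].
  by exists 1%g => y; rewrite inE.
have leS'm : #|S :\ x| <= m by rewrite (cardsD1 x S) xS add1n ltnS in leSm.
have [p1 p1F] := IH _ leS'm (sub_in2 (fun y => @subsetP _ _ _ (subD1set S x) y) injF).
exists (p1 * tperm (p1 x) (F x))%g => y yS; rewrite permM.
case: (eqVneq y x) => [-> | neyx]; first by rewrite tpermL.
have yS' : y \in S :\ x by rewrite !inE neyx.
rewrite (p1F y yS') tpermD //.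
  by rewrite -(p1F y yS'); apply/eqP => /perm_inj /eqP; rewrite eq_sym (negPf neyx).
by apply/eqP => /(injF _ _ xS yS) /eqP; rewrite eq_sym (negPf neyx).
Qed.

(* The extensions form a coset of the permutations of the complement. *)
Lemma card_perm_extend (S : {set T}) (F : T -> T) :
  {in S &, injective F} ->
  #|[set p : {perm T} | [forall x in S, p x == F x]]| = (#|T| - #|S|)`!.
Proof.
move=> injF; have [p0 p0F] := perm_extend injF.
have -> : [set p : {perm T} | [forall x in S, p x == F x]] =
          [set (q * p0)%g | q in [set q | perm_on (~: S) q]].
  apply/setP => p; rewrite inE; apply/idP/idP.
  - move=> /forall_inP pF; apply/imsetP; exists (p * p0^-1)%g; last first.
      by rewrite -mulgA mulVg mulg1.
    rewrite inE; apply/subsetP => x; rewrite !inE; apply: contraNN => xS.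
    by rewrite permM (eqP (pF _ xS)) -p0F // permK.
  - move=> /imsetP [q]; rewrite inE => qC ->; apply/forall_inP => x xS.
    by rewrite permM (out_perm qC) ?inE ?negbK // p0F.
rewrite card_imset; last exact: mulIg.
by rewrite cardsE card_perm -(cardsC S) addKn.
Qed.

Lemma card_perm_on_set (A : {set T}) : #|[set w : {perm T} | perm_on A w]| = #|A|`!.
Proof. by rewrite -card_perm; apply: eq_card => w; rewrite inE. Qed.

Lemma card_set_mulg (w : {perm T}) (P : pred {perm T}) :
  #|[set s | P (w * s)%g]| = #|[set s | P s]|.
Proof.
rewrite -(card_imset _ (mulgI w)); apply: eq_card => s; rewrite !inE.
apply/imsetP/idP => [[s' ]|Ps]; first by rewrite inE => Pws' ->.
by exists (w^-1 * s)%g; rewrite ?inE mulgA mulgV mul1g.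
Qed.

Lemma card_set_invg (P : pred {perm T}) : #|[set s | P (s^-1)%g]| = #|[set s | P s]|.
Proof.
rewrite -(card_imset _ (@invg_inj _)); apply: eq_card => s; rewrite !inE.
apply/imsetP/idP => [[s']|Ps]; first by rewrite inE => Ps' ->.
by exists (s^-1)%g; rewrite ?inE invgK.
Qed.

Lemma sum_nat_bool (P Q : pred T) :
  \sum_(x | P x) (Q x : nat) = #|[set x | P x && Q x]|.
Proof. by rewrite -sum1dep_card big_mkcondr /=; apply: eq_bigr => x _; case: (Q x). Qed.

End PermCounting.

Section CyclePoints.
Variable T : finType.
Implicit Types p s : {perm T}.

(* [c * m_c(p)] in the notation of the paper, see [cyc_pts_porbits]. *)
Definition cyc_pts p c := #|[set x | #|porbit p x| == c]|.

Definition same_cyc_pts (K : nat) p p' := forall c, 0 < c <= K -> cyc_pts p c = cyc_pts p' c.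

Lemma porbit_iterP p x y : reflect (exists i, y = iter i p x) (y \in porbit p x).
Proof.
by apply: (iffP (porbitP _ _ _)) => -[i ->]; exists i; rewrite permX.
Qed.

Lemma mem_porbit_iter p x i : iter i p x \in porbit p x.
Proof. by apply/porbit_iterP; exists i. Qed.

Lemma porbitJ p s x : porbit (p ^ s)%g (s x) = s @: porbit p x.
Proof.
apply/setP => y; apply/porbitP/imsetP.
- move=> [i ->]; exists ((p ^+ i)%g x); first exact: mem_porbit.
  by rewrite -conjXg permJ.
- move=> [z /porbitP [i ->] ->]; exists i; by rewrite -conjXg permJ.
Qed.

Lemma cyc_ptsJ p s c : cyc_pts (p ^ s)%g c = cyc_pts p c.
Proof.
rewrite /cyc_pts -[RHS](card_imset _ (@perm_inj _ s)); apply: eq_card => x.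
rewrite inE -{1}(permKV s x) porbitJ card_imset; last exact: perm_inj.
by rewrite -{2}(permKV s x) mem_imset ?inE //; apply: perm_inj.
Qed.

Lemma cyc_pts_porbits p c : cyc_pts p c = c * #|[set C in porbits p | #|C| == c]|.
Proof.
rewrite /cyc_pts -sum1dep_card.
rewrite (partition_big (porbit p) (mem (porbits p))) => [|x _]; last exact: imset_f.
rewrite -sum1dep_card big_distrr /= big_mkcond [RHS]big_mkcond /=.
apply: eq_bigr => C _; case: (boolP (C \in porbits p)) => //= /imsetP [y _ ->].
rewrite sum1dep_card.
have -> : [set x | (#|porbit p x| == c) && (porbit p x == porbit p y)] =
          [set x in porbit p y | #|porbit p y| == c].
  apply/setP => x; rewrite !inE eq_porbit_mem andbC.
  case: (boolP (x \in porbit p y)) => //= xy.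
  by rewrite -eq_porbit_mem in xy; rewrite (eqP xy).
case: ifP => [/eqP <-|_]; last by apply: eq_card0 => x; rewrite !inE andbF.
by rewrite muln1; apply: eq_card => x; rewrite !inE andbT.
Qed.

Lemma iter_mod (f : T -> T) x c :
  iter c f x = x -> forall j, iter j f x = iter (j %% c) f x.
Proof.
move=> fcx j; rewrite {1}(divn_eq j c) addnC iterD; congr (iter _ f _).
by elim: (j %/ c) => [|k IH]; rewrite ?mul0n // mulSn iterD IH fcx.
Qed.

Lemma card_porbit_cycle p y c :
  0 < c -> iter c p y = y -> uniq (traject p y c) -> #|porbit p y| = c.
Proof.
move=> c_gt0 pcy uniq_tr; rewrite -[RHS](size_traject p y) -(card_uniqP uniq_tr).
apply: eq_card => z; apply/porbit_iterP/trajectP => [[i ->]|[i _ ->]]; last by exists i.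
by exists (i %% c); [rewrite ltn_pmod | apply: iter_mod].
Qed.

End CyclePoints.

Section ConjugateOn.
Variable T : finType.
Implicit Types (p t s q w : {perm T}) (D : {set T}).

Definition conj_on p t D s := [forall x in D, p (s x) == s (t x)].
Definition nconj_on p t D := #|[set s | conj_on p t D s]|.

Lemma iter_homo_in t D : {homo t : x / x \in D} -> forall i x, x \in D -> iter i t x \in D.
Proof. by move=> tD; elim=> [|i IH] x xD //=; apply/tD/IH. Qed.

Lemma conj_on_iter p t D s : {homo t : x / x \in D} -> conj_on p t D s ->
  forall i x, x \in D -> iter i p (s x) = s (iter i t x).
Proof.
move=> tD /forall_inP pst; elim=> [|i IH] x xD //=.
by rewrite IH // (eqP (pst _ (iter_homo_in tD i xD))).
Qed.

Lemma card_porbit_conj_on p t D s : {homo t : x / x \in D} -> conj_on p t D s ->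
  forall x, x \in D -> #|porbit p (s x)| = #|porbit t x|.
Proof.
move=> tD pst x xD; have -> : porbit p (s x) = s @: porbit t x.
  apply/setP => y; apply/porbit_iterP/imsetP.
  - by move=> [i ->]; exists (iter i t x); rewrite ?mem_porbit_iter ?(conj_on_iter tD pst).
  - by move=> [z /porbit_iterP [i ->] ->]; exists i; rewrite (conj_on_iter tD pst).
by rewrite card_imset //; apply: perm_inj.
Qed.

Section OrbitStep.
Variables (p t : {perm T}) (D : {set T}) (u : T).
Hypothesis tD : {homo t : x / x \in D}.
Hypothesis uD : u \in D.
Local Notation E := (porbit t u).
Local Notation D' := (D :\: porbit t u).
Local Notation c := #|porbit t u|.
Local Notation orb := (traject t u #|porbit t u|).

Lemma orbit_subset : E \subset D.
Proof. by apply/subsetP => x /porbit_iterP [i ->]; apply: iter_homo_in. Qed.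

Lemma homo_rest : {homo t : x / x \in D'}.
Proof.
move=> x; rewrite !inE => /andP [xE xD]; rewrite tD // andbT; apply: contra xE => txE.
have : porbit t (t x) = porbit t u by apply/eqP; rewrite eq_porbit_mem.
have -> : t x = (t ^+ 1)%g x by rewrite expg1.
by rewrite porbit_perm => <-; apply: porbit_id.
Qed.

Lemma conj_on_split s : conj_on p t D s = conj_on p t D' s && conj_on p t E s.
Proof.
apply/forall_inP/andP => [pst|[/forall_inP pst' /forall_inP pstE] x xD].
  by split; apply/forall_inP => x xD; apply: pst;
    [move: xD; rewrite inE => /andP [] | exact: (subsetP orbit_subset)].
by case: (boolP (x \in E)) => xE; [apply: pstE | apply: pst'; rewrite inE xE].
Qed.

Lemma index_iter_orbit j : index (iter j t u) orb = j %% c.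
Proof.
have c_gt0 : 0 < c by rewrite lt0n card_porbit_neq0.
rewrite (iter_mod (iter_porbit t u)) -(@nth_traject _ t _ _ (ltn_pmod j c_gt0) u).
by rewrite index_uniq ?size_traject ?ltn_pmod ?uniq_traject_porbit.
Qed.

Lemma iter_index_orbit x : x \in E -> x = iter (index x orb) t u.
Proof.
rewrite porbit_traject => xorb.
have lt_ic : index x orb < c by move: (xorb); rewrite -index_mem size_traject.
by rewrite -(@nth_traject _ t _ _ lt_ic u) nth_index.
Qed.

Lemma conj_orbit_iter q : conj_on p t E q -> forall i, q (iter i t u) = iter i p (q u).
Proof.
move=> /forall_inP pqt; elim=> [|i IH] //=.
by rewrite -IH (eqP (pqt _ (mem_porbit_iter _ _ _))).
Qed.

Definition ncyc_rest := #|[set x in D' | #|porbit t x| == c]|.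

Section FixedRest.
Variable s : {perm T}.
Hypothesis pst : conj_on p t D' s.

Definition agree_rest q := [forall x in D', q x == s x].

(* The possible images of [u] under a solution extending [s]. *)
Definition admissible y := (y \notin s @: D') && (#|porbit p y| == c).

Definition extend_at y x := if x \in D' then s x else iter (index x orb) p y.

Lemma conj_orbit_admissible q y : agree_rest q -> conj_on p t E q -> q u = y ->
  admissible y /\ {in D, q =1 extend_at y}.
Proof.
move=> /forall_inP qs pqt quy; split.
  apply/andP; split.
    apply/imsetP => -[x xD' yx].
    have : q x = q u by rewrite quy yx (eqP (qs _ xD')).
    by move/perm_inj => ex; move: xD'; rewrite ex inE porbit_id.
  apply/eqP; apply: card_porbit_cycle; first by rewrite lt0n card_porbit_neq0.
    by rewrite -quy -conj_orbit_iter // iter_porbit.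
  have -> : traject p y c = map q orb.
    apply: (@eq_from_nth _ y); first by rewrite size_map !size_traject.
    move=> i; rewrite size_traject => ic.
    by rewrite (nth_map u) ?size_traject // !nth_traject // conj_orbit_iter // quy.
  by rewrite map_inj_uniq ?uniq_traject_porbit //; apply: perm_inj.
move=> x xD; rewrite /extend_at; case: ifP => xD'; first exact: eqP (qs _ xD').
have xE : x \in E by move: xD'; rewrite inE xD andbT => /negbFE.
by rewrite {1}(iter_index_orbit xE) conj_orbit_iter // quy.
Qed.

Lemma iter_image_rest i y : y \in s @: D' -> iter i p y \in s @: D'.
Proof.
move=> /imsetP [x xD' ->]; rewrite (conj_on_iter homo_rest pst i xD').
exact/imset_f/(iter_homo_in homo_rest).
Qed.

Lemma extend_at_inj y : admissible y -> {in D &, injective (extend_at y)}.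
Proof.
move=> /andP [ynot /eqP cyc_y] x1 x2 x1D x2D; rewrite /extend_at.
have orbit_fresh i : i < c -> iter i p y \notin s @: D'.
  move=> ic; apply: contra ynot => /(iter_image_rest (c - i)).
  by rewrite -iterD subnK ?(ltnW ic) // -[X in iter X]cyc_y iter_porbit.
have inE_of x : x \in D -> x \notin D' -> x \in E.
  by move=> xD; rewrite inE xD andbT => /negbNE.
have index_lt x : x \in E -> index x orb < c.
  by rewrite porbit_traject -index_mem size_traject.
case: ifP => x1D'; case: ifP => x2D'.
- exact: perm_inj.
- move=> e; have := orbit_fresh _ (index_lt _ (inE_of _ x2D (negbT x2D'))).
  by rewrite -e imset_f.
- move=> e; have := orbit_fresh _ (index_lt _ (inE_of _ x1D (negbT x1D'))).
  by rewrite e imset_f.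
- move=> e; have x1E := inE_of _ x1D (negbT x1D'); have x2E := inE_of _ x2D (negbT x2D').
  rewrite (iter_index_orbit x1E) (iter_index_orbit x2E); congr (iter _ t u); apply/eqP.
  have uniq_y : uniq (traject p y c) by rewrite -{1}cyc_y uniq_traject_porbit.
  rewrite -(nth_uniq y _ _ uniq_y) ?size_traject ?index_lt //.
  by rewrite !nth_traject ?index_lt // e.
Qed.

Lemma extend_at_conj y q : admissible y -> {in D, q =1 extend_at y} ->
  [/\ agree_rest q, conj_on p t E q & q u = y].
Proof.
move=> /andP [_ /eqP cyc_y] qext.
have q_iter j : q (iter j t u) = iter j p y.
  have jE : iter j t u \in E by exact: mem_porbit_iter.
  rewrite qext ?(iter_homo_in tD) // /extend_at inE jE /= index_iter_orbit.
  by rewrite -(iter_mod _ j) // -cyc_y iter_porbit.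
split; last exact: q_iter 0.
- apply/forall_inP => x xD'; rewrite qext; first by rewrite /extend_at xD'.
  by move: xD'; rewrite inE => /andP [].
- by apply/forall_inP => x xE; rewrite (iter_index_orbit xE) q_iter -!iterS q_iter.
Qed.

Lemma card_conj_orbit_at y :
  #|[set q | [&& agree_rest q, conj_on p t E q & q u == y]]| =
  if admissible y then (#|T| - #|D|)`! else 0.
Proof.
case: ifP => ady.
  rewrite -(card_perm_extend (extend_at_inj ady)); apply: eq_card => q; rewrite !inE.
  apply/and3P/forall_inP => [[qs pqt /eqP quy] x xD|qext].
    by have [_ ->] := conj_orbit_admissible qs pqt quy.
  by have [] := extend_at_conj ady (fun x xD => eqP (qext x xD)) => -> -> ->.
apply: eq_card0 => q; rewrite !inE; apply/and3P => -[qs pqt /eqP quy].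
by have [ady' _] := conj_orbit_admissible qs pqt quy; rewrite ady' in ady.
Qed.

Lemma card_admissible : #|[set y | admissible y]| = cyc_pts p c - ncyc_rest.
Proof.
set H := [set y | #|porbit p y| == c].
rewrite /cyc_pts -/H -(cardsID (s @: D') H).
have -> : H :&: s @: D' = s @: [set x in D' | #|porbit t x| == c].
  apply/setP => y; rewrite !inE; apply/andP/imsetP.
  - move=> [cyc_y /imsetP [x xD' yx]]; exists x => //.
    by rewrite inE xD' -(card_porbit_conj_on homo_rest pst xD') -yx.
  - move=> [x]; rewrite inE => /andP [xD' cyc_x] ->; split; last exact: imset_f.
    by rewrite (card_porbit_conj_on homo_rest pst xD').
rewrite card_imset; last exact: perm_inj.
by rewrite /ncyc_rest addKn; apply: eq_card => y; rewrite !inE /admissible andbC.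
Qed.

Lemma card_conj_orbit_perm_on :
  #|[set w | perm_on (~: D') w && conj_on p t E (w * s)%g]| =
  (cyc_pts p c - ncyc_rest) * (#|T| - #|D|)`!.
Proof.
have -> : [set w | perm_on (~: D') w && conj_on p t E (w * s)%g] =
          [set q * s^-1 | q in [set q | agree_rest q && conj_on p t E q]]%g.
  apply/setP => w; rewrite inE; apply/andP/imsetP.
  - move=> [wD' pwt]; exists (w * s)%g; last by rewrite -mulgA mulgV mulg1.
    rewrite inE pwt andbT; apply/forall_inP => x xD'.
    by rewrite permM (out_perm wD') // inE negbK.
  - move=> [q]; rewrite inE => /andP [/forall_inP qs pqt] ->.
    rewrite -mulgA mulVg mulg1; split=> //.
    apply/subsetP => x; rewrite inE in_setC; apply: contra_neqN => xD'.
    by rewrite permM (eqP (qs _ xD')) permK.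
rewrite card_imset; last exact: mulIg.
rewrite -card_admissible -[LHS]sum1dep_card (partition_big (fun q : {perm T} => q u) predT) //=.
rewrite -sum_nat_const [RHS]big_mkcond /=; apply: eq_bigr => y _.
by rewrite sum1dep_card inE -card_conj_orbit_at; apply: eq_card => q; rewrite !inE andbA.
Qed.

End FixedRest.

Lemma conj_on_rest_mul w s : perm_on (~: D') w -> conj_on p t D' (w * s)%g = conj_on p t D' s.
Proof.
move=> wD'; have w_id z : z \in D' -> w z = z by move=> zD'; rewrite (out_perm wD') // inE negbK.
by apply: eq_forallb_in => x xD'; rewrite !permM !w_id //; apply: homo_rest.
Qed.

(* Double counting of the pairs (w, s) with w fixing D' pointwise, s a solution
   on D', and w * s a solution on D. *)
Lemma nconj_on_orbit_step :
  nconj_on p t D * (#|T| - #|D'|)`! =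
  nconj_on p t D' * ((cyc_pts p c - ncyc_rest) * (#|T| - #|D|)`!).
Proof.
set X := (cyc_pts p c - ncyc_rest) * _.
transitivity (\sum_(s | conj_on p t D' s)
               #|[set w | perm_on (~: D') w && conj_on p t E (w * s)%g]|); last first.
  rewrite (eq_bigr (fun _ => 1 * X)) => [|s pst]; last by rewrite mul1n card_conj_orbit_perm_on.
  by rewrite -big_distrl /= sum1dep_card.
rewrite (eq_bigr (fun s => \sum_(w | perm_on (~: D') w) (conj_on p t E (w * s)%g : nat)))
  => [|s _]; last by rewrite sum_nat_bool.
rewrite exchange_big /= (eq_bigr (fun _ => nconj_on p t D * 1)) => [|w wD']; last first.
  rewrite muln1 sum_nat_bool /nconj_on -[RHS](card_set_mulg w); apply: eq_card => s.
  by rewrite !inE conj_on_split (conj_on_rest_mul _ wD').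
by rewrite -big_distrr /= sum1dep_card card_perm_on_set -(cardsC D') addKn.
Qed.

End OrbitStep.

Lemma nconj_on_set0 p t : nconj_on p t set0 = #|{perm T}|.
Proof.
by rewrite /nconj_on -cardsT; apply: eq_card => s; rewrite !inE; apply/forall_inP => x; rewrite inE.
Qed.

Lemma nconj_on_same_cyc_pts K t D : {homo t : x / x \in D} -> #|D| <= K ->
  forall p p', same_cyc_pts K p p' -> nconj_on p t D = nconj_on p' t D.
Proof.
move: {2}#|D| (leqnn #|D|) => m; elim: m D => [|m IH] D leDm tD leDK p p' pp'.
  by move: leDm; rewrite leqn0 cards_eq0 => /eqP ->; rewrite !nconj_on_set0.
case: (set_0Vmem D) => [-> | [u uD]]; first by rewrite !nconj_on_set0.
have ltD'D : #|D :\: porbit t u| < #|D|.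
  rewrite -(cardsID (porbit t u) D) -addn1 addnC leq_add2r card_gt0.
  by apply/set0Pn; exists u; rewrite inE uD porbit_id.
have eq_rest : nconj_on p t (D :\: porbit t u) = nconj_on p' t (D :\: porbit t u).
  apply: IH => //; first by rewrite -ltnS (leq_trans ltD'D).
    exact: (homo_rest tD).
  exact: leq_trans (ltnW ltD'D) leDK.
have eq_cyc : cyc_pts p #|porbit t u| = cyc_pts p' #|porbit t u|.
  apply: pp'; rewrite lt0n card_porbit_neq0 /=.
  exact: leq_trans (subset_leq_card (orbit_subset tD uD)) leDK.
apply/eqP; rewrite -(eqn_pmul2r (fact_gt0 (#|T| - #|D :\: porbit t u|))).
by rewrite !(nconj_on_orbit_step _ tD uD) eq_rest eq_cyc.
Qed.

End ConjugateOn.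

Section Embeddings.
Variable T : finType.
Implicit Types (A B : {set T * T}) (p s : {perm T}).

(* Relations [A] on [T] play the role of the partial permutations (I, J). *)
Definition embeds p A s := [forall e in A, p (s e.1) == s e.2].
Definition nembeds p A := #|[set s | embeds p A s]|.
Definition rdom A := [set e.1 | e in A].
Definition rsupp A := [set e.1 | e in A] :|: [set e.2 | e in A].
Definition partial_inj A :=
  [forall e in A, forall e' in A, (e.1 == e'.1) == (e.2 == e'.2)].

Lemma nembeds_not_partial_inj p A : ~~ partial_inj A -> nembeds p A = 0.
Proof.
move=> notA; apply: eq_card0 => s; rewrite inE; apply: contraNF notA => /forall_inP ps.
apply/forall_inP => e eA; apply/forall_inP => e' e'A.
rewrite -(inj_eq (@perm_inj _ s)) -(inj_eq (@perm_inj _ p)) (eqP (ps e eA)) (eqP (ps e' e'A)).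
by rewrite (inj_eq (@perm_inj _ s)).
Qed.

Lemma partial_injP A e e' : partial_inj A -> e \in A -> e' \in A ->
  (e.1 == e'.1) = (e.2 == e'.2).
Proof.
by move=> /forall_inP injA eA e'A; move/forall_inP: (injA e eA) => /(_ e' e'A)/eqP.
Qed.

Lemma mem_rsupp1 A e : e \in A -> e.1 \in rsupp A.
Proof. by move=> eA; rewrite inE imset_f. Qed.

Lemma mem_rsupp2 A e : e \in A -> e.2 \in rsupp A.
Proof. by move=> eA; rewrite inE orbC imset_f. Qed.

Lemma rsuppP A x : reflect (exists2 e, e \in A & (x == e.1) || (x == e.2)) (x \in rsupp A).
Proof.
apply: (iffP idP).
- rewrite inE => /orP [] /imsetP [e eA ->]; exists e => //; by rewrite eqxx ?orbT.
- by move=> [e eA /orP [] /eqP ->]; [apply: mem_rsupp1 | apply: mem_rsupp2].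
Qed.

Lemma embedsU1 p B e s : embeds p (B :|: [set e]) s = embeds p B s && (p (s e.1) == s e.2).
Proof.
apply/forall_inP/andP => [ps|[/forall_inP pBs pes] e'].
  split; last by apply: ps; rewrite !inE eqxx orbT.
  by apply/forall_inP => e' e'B; apply: ps; rewrite inE e'B.
by rewrite !inE => /orP [/pBs|/eqP ->].
Qed.

Section ClosedRelation.
Variable A : {set T * T}.
Hypothesis injA : partial_inj A.
Hypothesis closedA : forall e, e \in A -> e.2 \in rdom A.

Definition rel_fun x := odflt x [pick y | (x, y) \in A].

Lemma rel_fun_in x y : (x, y) \in A -> rel_fun x = y.
Proof.
move=> xyA; rewrite /rel_fun; case: pickP => [y' xy'A /= | /(_ y)]; last by rewrite xyA.
by apply/eqP; rewrite -(partial_injP injA xy'A xyA) /= eqxx.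
Qed.

Lemma rel_fun_rdom x : x \in rdom A -> (x, rel_fun x) \in A.
Proof. by move=> /imsetP [[a b] abA ->] /=; rewrite (rel_fun_in abA). Qed.

Lemma rel_fun_out x : x \notin rdom A -> rel_fun x = x.
Proof.
move=> xA; rewrite /rel_fun; case: pickP => [y xyA | //].
by move: xA; rewrite (imset_f (fun e : T * T => e.1) xyA).
Qed.

Lemma rel_fun_homo : {homo rel_fun : x / x \in rdom A}.
Proof. by move=> x xA; apply: (closedA (rel_fun_rdom xA)). Qed.

Lemma rel_fun_inj : injective rel_fun.
Proof.
move=> x y; case: (boolP (x \in rdom A)) => xA; case: (boolP (y \in rdom A)) => yA.
- move=> exy; have := rel_fun_rdom xA; rewrite exy => xfyA.
  by apply/eqP; rewrite (partial_injP injA xfyA (rel_fun_rdom yA)) eqxx.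
- by move=> exy; have := rel_fun_homo xA; rewrite exy (rel_fun_out yA) (negPf yA).
- by move=> exy; have := rel_fun_homo yA; rewrite -exy (rel_fun_out xA) (negPf xA).
- by rewrite (rel_fun_out xA) (rel_fun_out yA).
Qed.

Definition rel_perm := perm rel_fun_inj.

Lemma rel_perm_homo : {homo rel_perm : x / x \in rdom A}.
Proof. by move=> x; rewrite permE; apply: rel_fun_homo. Qed.

Lemma nembeds_closed p : nembeds p A = nconj_on p rel_perm (rdom A).
Proof.
apply: eq_card => s; rewrite !inE; apply/forall_inP/forall_inP => ps.
  by move=> x xA; rewrite permE; apply: (ps _ (rel_fun_rdom xA)).
move=> e eA; have := ps _ (imset_f (fun e : T * T => e.1) eA).
by rewrite permE (rel_fun_in (y := e.2)) -?surjective_pairing.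
Qed.

End ClosedRelation.

Section OpenEdge.
Variables (A : {set T * T}) (u v : T).
Hypothesis injA : partial_inj A.
Hypothesis uvA : (u, v) \in A.
Hypothesis vA : v \notin rdom A.
Local Notation B := (A :\ (u, v)).
Local Notation S := (rsupp (A :\ (u, v)) :|: [set u]).

Lemma neq_open_edge : u != v.
Proof. by apply: contraNneq vA => <-; apply: (imset_f (fun e : T * T => e.1) uvA). Qed.

Lemma notin_rsupp_open_end : v \notin S.
Proof.
rewrite in_setU in_set1 negb_or eq_sym neq_open_edge andbT.
apply/rsuppP => -[e]; rewrite inE => /andP [ne eA] /orP [] /eqP ve.
  by move: vA; rewrite ve (imset_f (fun e : T * T => e.1) eA).
have := partial_injP injA eA uvA; rewrite /= -ve eqxx => /eqP e1u.
by move: ne; rewrite [e]surjective_pairing e1u -ve in_set1 eqxx.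
Qed.

Lemma nembeds_partition p : nembeds p B = \sum_w nembeds p (B :|: [set (u, w)]).
Proof.
rewrite /nembeds -sum1dep_card (partition_big (fun s : {perm T} => (s^-1)%g (p (s u))) predT) //=.
apply: eq_bigr => w _; rewrite sum1dep_card; apply: eq_card => s; rewrite !inE embedsU1 /=.
by rewrite -(inj_eq (@perm_inj _ s)) permKV.
Qed.

Lemma nembeds_fresh p w : w \notin S -> nembeds p (B :|: [set (u, w)]) = nembeds p A.
Proof.
move=> wS; rewrite /nembeds -[RHS](card_set_mulg (tperm v w)); apply: eq_card => s.
have defA : A = B :|: [set (u, v)] by rewrite setUC setD1K.
rewrite !inE [in RHS]defA !embedsU1 /= !permM tpermL.
have uw : u != w by apply: contraNneq wS => <-; rewrite !inE eqxx orbT.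
rewrite (tpermD (x := v)) 1?eq_sym ?neq_open_edge //; congr andb.
have vw_id x : x \in rsupp B -> tperm v w x = x.
  move=> xB; apply: tpermD; [move: notin_rsupp_open_end | move: wS];
    by apply: contraNneq => ex; rewrite {1}ex inE xB.
apply: eq_forallb_in => e eB; rewrite !permM !vw_id //; [exact: mem_rsupp2 | exact: mem_rsupp1].
Qed.

(* Split the solutions on [B] according to [w = s^-1 (p (s u))]: the values of
   [w] outside [S] all behave like the fresh point [v]. *)
Lemma nembeds_open_edge p :
  nembeds p B = (#|T| - #|S|) * nembeds p A + \sum_(w in S) nembeds p (B :|: [set (u, w)]).
Proof.
rewrite nembeds_partition (bigID (mem S)) addnC /=; congr (_ + _).
rewrite (eq_bigr (fun _ => 1 * nembeds p A)) => [|w wS]; last by rewrite mul1n nembeds_fresh.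
by rewrite -big_distrl /= sum1dep_card -(cardsC S) addKn.
Qed.

Lemma rsupp_sub_open : rsupp B \subset S.
Proof. by apply/subsetP => x xB; rewrite inE xB. Qed.

Lemma rsupp_sub_redirect w : w \in S -> rsupp (B :|: [set (u, w)]) \subset S.
Proof.
move=> wS; apply/subsetP => x /rsuppP [e /setUP [eB | /set1P ->] /orP [] /eqP ->] //=.
- by rewrite in_setU (mem_rsupp1 eB).
- by rewrite in_setU (mem_rsupp2 eB).
- by rewrite in_setU in_set1 eqxx orbT.
Qed.

Lemma card_open_lt : #|S| < #|rsupp A|.
Proof.
apply: proper_card; apply/properP; split; last first.
  by exists v; [apply: mem_rsupp2 uvA | apply: notin_rsupp_open_end].
apply/subsetP => x /setUP [/rsuppP [e /setD1P [_ eA] /orP [] /eqP ->] | /set1P ->].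
- exact: mem_rsupp1.
- exact: mem_rsupp2.
exact: mem_rsupp1 uvA.
Qed.

Lemma card_open_compl_gt0 : 0 < #|T| - #|S|.
Proof.
rewrite -(cardsC S) addKn card_gt0; apply/set0Pn; exists v.
by rewrite inE notin_rsupp_open_end.
Qed.

Lemma card_open_redirect w : #|B :|: [set (u, w)]| <= #|A|.
Proof.
apply: leq_trans (leq_card_setU _ _) _.
by rewrite cards1 addn1 (cardsD1 (u, v) A) uvA.
Qed.

End OpenEdge.

Lemma nembeds_reduce K A p p' : same_cyc_pts K p p' -> #|A| <= K ->
  (forall A', #|rsupp A'| < #|rsupp A| -> #|A'| <= K -> nembeds p A' = nembeds p' A') ->
  nembeds p A = nembeds p' A.
Proof.
move=> pp' leAK IH; case: (boolP (partial_inj A)) => injA; last first.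
  by rewrite !nembeds_not_partial_inj.
case: (boolP [exists e in A, e.2 \notin rdom A]) => [|no_open_edge].
  move=> /exists_inP [[u v] uvA /= vA].
  set B := A :\ (u, v); set S := rsupp B :|: [set u].
  have IH' A' : rsupp A' \subset S -> #|A'| <= #|A| -> nembeds p A' = nembeds p' A'.
    move=> A'S leA'A; apply: IH; last exact: leq_trans leA'A leAK.
    exact: leq_ltn_trans (subset_leq_card A'S) (card_open_lt injA uvA vA).
  have eq_redirect : \sum_(w in S) nembeds p (B :|: [set (u, w)]) =
                     \sum_(w in S) nembeds p' (B :|: [set (u, w)]).
    by apply: eq_bigr => w wS; rewrite IH' ?rsupp_sub_redirect ?card_open_redirect.
  have := nembeds_open_edge injA uvA vA p'.
  rewrite -(IH' B) ?rsupp_sub_open ?subset_leq_card ?subD1set //.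
  rewrite (nembeds_open_edge injA uvA vA p) -eq_redirect => /addIn /eqP.
  by rewrite eqn_pmul2l ?(card_open_compl_gt0 injA uvA vA) // => /eqP.
have closedA e : e \in A -> e.2 \in rdom A.
  by move=> eA; apply: contraNT no_open_edge => eAc; apply/exists_inP; exists e.
rewrite !(nembeds_closed injA closedA); apply: nconj_on_same_cyc_pts pp'.
  exact: rel_perm_homo.
exact: leq_trans (leq_imset_card _ _) leAK.
Qed.

Lemma nembeds_same_cyc_pts K A p p' : same_cyc_pts K p p' -> #|A| <= K ->
  nembeds p A = nembeds p' A.
Proof.
move=> pp'; elim: {A}_.+1 {-2}A (ltnSn #|rsupp A|) => // m IH A ltAm leAK.
by apply: nembeds_reduce pp' leAK _ => A' ltA'A; apply: IH; apply: leq_trans ltA'A _.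
Qed.

End Embeddings.

Section CyclePointsRealization.
Variable T : finType.

Lemma porbit_eq_on (p q : {perm T}) (Z : {set T}) :
  {in Z, p =1 q} -> {homo q : x / x \in Z} -> {in Z, porbit p =1 porbit q}.
Proof.
move=> pq qZ x xZ.
have iter_pq i : iter i p x = iter i q x /\ iter i q x \in Z.
  elim: i => [|i [IHi iZ]] //=.
  by rewrite IHi (pq _ iZ); split; last exact: qZ.
by apply/setP => y; apply/porbit_iterP/porbit_iterP => -[i ->]; exists i; case: (iter_pq i).
Qed.

Lemma exists_cycle_on (Y : {set T}) :
  exists q : {perm T}, perm_on Y q /\ {in Y, forall y, porbit q y = Y}.
Proof.
have uniqY := enum_uniq (pred_of_set Y).
have next_inj : injective (next (enum Y)) by apply: (can_inj (prev_next uniqY)).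
exists (perm next_inj); split.
  apply/subsetP => x; rewrite inE permE; apply: contraNT => xY.
  by rewrite next_nth mem_enum (negPf xY).
move=> y yY; apply/setP => z; apply/porbit_iterP/idP => [[i ->]|zY].
  by elim: i => [|i IH] //=; rewrite permE -mem_enum mem_next mem_enum.
have yz : fconnect (next (enum Y)) y z.
  by rewrite (fconnect_cycle (cycle_next uniqY)) mem_enum.
exists (findex (next (enum Y)) y z); rewrite -{1}(iter_findex yz).
by apply: eq_iter => w; rewrite permE.
Qed.

Lemma porbit_mul_perm_on (A B : {set T}) (p q : {perm T}) :
  perm_on A p -> perm_on B q -> [disjoint A & B] ->
  {in ~: B, porbit (p * q)%g =1 porbit p} /\ {in B, porbit (p * q)%g =1 porbit q}.
Proof.
move=> pA qB AB; have p_notB : {homo p : z / z \in ~: B}.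
  move=> z; rewrite !in_setC; case: (boolP (z \in A)) => zA zB.
    by rewrite (disjointFr AB) // perm_closed.
  by rewrite (out_perm pA zA).
split; apply: porbit_eq_on => // z zB; rewrite ?perm_closed // permM.
  by rewrite (out_perm qB) // -in_setC p_notB.
by rewrite (out_perm pA) // (disjointFl AB zB).
Qed.

(* Glue one cycle on the first [l] points of [X] to a permutation of the rest
   obtained by induction. *)
Lemma exists_perm_on_cyc_pts (la : seq nat) (X : {set T}) :
  all (fun x => 0 < x) la -> sumn la = #|X| ->
  exists p : {perm T}, perm_on X p /\
    forall c, 0 < c -> #|[set x in X | #|porbit p x| == c]| = c * count_mem c la.
Proof.
elim: la X => [|l la IH] X /=.
  move=> _ /esym /eqP; rewrite cards_eq0 => /eqP ->; exists 1%g; split => [|c _].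
    by apply/subsetP => x; rewrite inE perm1 eqxx.
  by rewrite muln0; apply: eq_card0 => x; rewrite !inE.
move=> /andP [l_gt0 la_gt0] sum_la.
pose Y := [set x in take l (enum X)].
have cardY : #|Y| = l.
  rewrite cardsE (card_uniqP (take_uniq _ (enum_uniq _))).
  by rewrite size_takel // -cardE -sum_la leq_addr.
have YX : Y \subset X by apply/subsetP => x; rewrite inE => /mem_take; rewrite mem_enum.
have sum_rest : sumn la = #|X :\: Y| by rewrite cardsD (setIidPr YX) cardY -sum_la addKn.
have [p' [p'XY cyc_p']] := IH (X :\: Y) la_gt0 sum_rest.
have [q [qY cyc_q]] := exists_cycle_on Y.
have /subsetDP [_ disjXY] := subxx (X :\: Y).
have [porbit_notY porbitY] := porbit_mul_perm_on p'XY qY disjXY.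
exists (p' * q)%g; split.
  by apply: perm_onM; [apply: subset_trans p'XY (subsetDl _ _) | apply: subset_trans qY YX].
move=> c c_gt0; rewrite /= mulnDr -(cyc_p' c c_gt0) -(cardsID Y); congr (_ + _).
  transitivity #|[set x in Y | l == c]|.
    apply: eq_card => x; rewrite in_setI [in RHS]inE.
    case: (boolP (x \in Y)) => xY; rewrite ?andbF //= inE porbitY // cyc_q // cardY.
    by rewrite (subsetP YX x xY) andbT.
  case: eqP => [<- | _]; first by rewrite muln1 -cardY; apply: eq_card => x; rewrite !inE andbT.
  by rewrite muln0; apply: eq_card0 => x; rewrite !inE andbF.
apply: eq_card => x; rewrite in_setD [in RHS]inE in_setD.
by case: (boolP (x \in Y)) => xY //=; rewrite inE porbit_notY // in_setC xY.
Qed.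

End CyclePointsRealization.

Section CycleTypes.
Variable n : nat.
Implicit Types (p s : {perm 'I_n}) (la : seq nat).

Lemma mult_cycle_type p c : mult c (cycle_type p) = #|[set C in porbits p | #|C| == c]|.
Proof.
rewrite /mult.
have /seq.permP-> : perm_eq (cycle_type p) [seq #|C| | C : {set 'I_n} <- enum (porbits p)].
  by rewrite perm_sort.
by rewrite count_map -sum1_count big_enum_cond sum1dep_card; apply: eq_card => C; rewrite !inE.
Qed.

Lemma mulnm_cycle_type p c : c * mult c (cycle_type p) = cyc_pts p c.
Proof. by rewrite mult_cycle_type cyc_pts_porbits. Qed.

Lemma mult0_cycle_type p : mult 0 (cycle_type p) = 0.
Proof.
rewrite mult_cycle_type; apply: eq_card0 => C; rewrite !inE.
by apply/andP => -[/imsetP [x _ ->]]; rewrite (negPf (card_porbit_neq0 _ _)).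
Qed.

Lemma geq_total : total geq.
Proof. by move=> a b; apply: leq_total. Qed.

Lemma cycle_type_eq p la : sorted geq la -> mult 0 la = 0 ->
  (forall c, 0 < c -> c * mult c la = cyc_pts p c) -> cycle_type p = la.
Proof.
move=> sorted_la mult0 cyc_la.
have geq_trans : transitive geq by move=> a b c ba cb; apply: leq_trans cb ba.
have geq_anti : antisymmetric geq by move=> a b /andP [ba ab]; apply/anti_leq/andP.
apply: (sorted_eq geq_trans geq_anti); rewrite ?(sort_sorted geq_total) //.
apply/allP => -[|c] _; rewrite inE -!/(mult _ _); first by rewrite mult0_cycle_type mult0.
by rewrite -(eqn_pmul2l (ltn0Sn c)) mulnm_cycle_type cyc_la.
Qed.

Lemma cycle_typeJ p s : cycle_type (p ^ s)%g = cycle_type p.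
Proof.
apply: cycle_type_eq => [||c _]; rewrite ?(sort_sorted geq_total) ?mult0_cycle_type //.
by rewrite mulnm_cycle_type cyc_ptsJ.
Qed.

Lemma exists_perm_cycle_type la : is_partition n la -> exists p, cycle_type p = la.
Proof.
move=> /and3P [sorted_la la_gt0 /eqP sum_la].
have sumT : sumn la = #|[set: 'I_n]| by rewrite cardsT card_ord.
have [p [_ cyc_p]] := exists_perm_on_cyc_pts la_gt0 sumT.
exists p; apply: cycle_type_eq => // [|c c_gt0].
  by apply/count_memPn; apply: contraTN la_gt0 => la0; apply/allPn; exists 0.
by rewrite -cyc_p //; apply: eq_card => x; rewrite !inE.
Qed.

Lemma same_cyc_pts_mult K p q :
  (forall c, 0 < c <= K -> mult c (cycle_type p) = mult c (cycle_type q)) ->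
  same_cyc_pts K p q.
Proof. by move=> pq c cK; rewrite -!mulnm_cycle_type pq. Qed.

End CycleTypes.

Section ExtensionSpan.
Variable T : finType.
Implicit Types (p s : {perm T}) (A : {set T * T}).
Local Open Scope ring_scope.

Definition extends p A := [forall e in A, p e.1 == e.2].

Lemma card_extends_conjg p A : #|[set s | extends (p ^ s)%g A]| = nembeds p A.
Proof.
rewrite /nembeds -card_set_invg; apply: eq_card => s; rewrite !inE.
apply: eq_forallb_in => e eA; rewrite /conjg !permM.
by rewrite -(inj_eq (@perm_inj _ (s^-1)%g)) permK.
Qed.

Lemma extendsU p A B : extends p (A :|: B) = extends p A && extends p B.
Proof.
apply/forall_inP/andP => [pAB|[/forall_inP pA /forall_inP pB] e].
  by split; apply/forall_inP => e eA; apply: pAB; rewrite inE eA ?orbT.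
by rewrite inE => /orP [/pA|/pB].
Qed.

Definition ext_span (R : comNzRingType) (K : nat) (F : {perm T} -> R) :=
  exists L : seq (R * {set T * T}), all (fun t : R * {set T * T} => #|t.2| <= K)%N L /\
    forall p, F p = \sum_(t <- L) t.1 * (extends p t.2)%:R.

Variable R : comNzRingType.
Implicit Types F G : {perm T} -> R.

Lemma eq_ext_span K F G : F =1 G -> ext_span K F -> ext_span K G.
Proof. by move=> FG [L [LK FL]]; exists L; split => // p; rewrite -FG. Qed.

Lemma ext_span1 : ext_span 0 (fun _ => 1 : R).
Proof.
exists [:: (1, set0)]; split => [|p]; first by rewrite /= cards0.
rewrite big_seq1 /= mul1r.
by have -> : extends p set0 by apply/forall_inP => e; rewrite inE.
Qed.

Lemma ext_spanM K1 K2 F G :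
  ext_span K1 F -> ext_span K2 G -> ext_span (K1 + K2) (fun p => F p * G p).
Proof.
move=> [L1 [L1K FL1]] [L2 [L2K GL2]].
exists [seq (a.1 * b.1, a.2 :|: b.2) | a <- L1, b <- L2]; split.
  apply/allP => t /allpairsP [[a b] [/= aL1 bL2 ->]] /=.
  exact: leq_trans (leq_card_setU _ _) (leq_add (allP L1K a aL1) (allP L2K b bL2)).
move=> p; rewrite FL1 GL2 big_allpairs_dep /= mulr_suml; apply: eq_bigr => a _.
rewrite mulr_sumr; apply: eq_bigr => b _ /=.
by rewrite extendsU -mulnb natrM mulrACA.
Qed.

Lemma ext_spanX K F d : ext_span K F -> ext_span (K * d) (fun p => F p ^+ d).
Proof.
move=> spanF; elim: d => [|d IH].
  by rewrite muln0; apply: eq_ext_span ext_span1 => p; rewrite expr0.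
by rewrite mulnS addnC; apply: eq_ext_span (ext_spanM IH spanF) => p; rewrite exprSr.
Qed.

Definition conj_sum F p := \sum_s F (p ^ s)%g.

(* Summing over conjugates turns each indicator [extends _ A] into [nembeds p A]. *)
Lemma conj_sum_same_cyc_pts K F p p' :
  ext_span K F -> same_cyc_pts K p p' -> conj_sum F p = conj_sum F p'.
Proof.
move=> [L [LK FL]] pp'.
have conj_sumE q : conj_sum F q = \sum_(t <- L) t.1 * (nembeds q t.2)%:R.
  rewrite /conj_sum (eq_bigr _ (fun s _ => FL (q ^ s)%g)) exchange_big /=.
  by apply: eq_bigr => t _; rewrite -mulr_sumr -natr_sum -card_extends_conjg sum_nat_bool.
rewrite !conj_sumE big_seq [RHS]big_seq; apply: eq_bigr => t tL.
by rewrite (nembeds_same_cyc_pts pp' (allP LK t tL)).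
Qed.

End ExtensionSpan.

Lemma lin_comb_pp_ext_span (R : comNzRingType) n k (f : {perm 'I_n} -> R) :
  lin_comb_pp k f -> ext_span k f.
Proof.
move=> [s [s_pp fs]]; exists [seq (t.1, [set e in zip t.2.1 t.2.2]) | t <- s]; split.
  apply/allP => _ /mapP [t ts ->] /=; have [l lk /and4P [/eqP size_I _ _ _]] := s_pp t ts.
  rewrite cardsE (leq_trans (card_size _)) // size_zip.
  by rewrite (leq_trans (geq_minl _ _)) // size_I.
move=> p; rewrite fs big_map; apply: eq_bigr => t _ /=; rewrite /ind_pp /extends.
congr (_ * _%:R)%R; congr (nat_of_bool _).
apply/allP/forall_inP => pIJ e; first by rewrite inE => /pIJ.
by move=> eIJ; apply: pIJ; rewrite inE.
Qed.

Section ExpectationByType.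
Variables (R : numFieldType) (n : nat).
Local Open Scope ring_scope.

Lemma Exp_ct_conj_sum la (F : {perm 'I_n} -> R) p0 : cycle_type p0 = la ->
  (forall p, cycle_type p = la -> conj_sum F p = conj_sum F p0) ->
  Exp_ct la F = conj_sum F p0 / (#|{perm 'I_n}|)%:R.
Proof.
move=> type_p0 class_const.
set C := [set p : {perm 'I_n} | cycle_type p == la].
have C_neq0 : (#|C|%:R : R) != 0.
  by rewrite pnatr_eq0 cards_eq0; apply/set0Pn; exists p0; rewrite inE type_p0.
have perm_neq0 : (#|{perm 'I_n}|%:R : R) != 0.
  by rewrite pnatr_eq0 -lt0n; apply/card_gt0P; exists 1%g.
rewrite /Exp_ct -/C; apply/eqP; rewrite eqr_div //; apply/eqP.
transitivity (\sum_(p | cycle_type p == la) conj_sum F p).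
  rewrite /conj_sum exchange_big /=.
  rewrite [RHS](eq_bigr (fun _ => \sum_(p | cycle_type p == la) F p)) => [|s _].
    by rewrite sumr_const mulr_natr.
  rewrite [RHS](reindex_inj (conjg_inj s)) /=.
  by apply: eq_bigl => p; rewrite cycle_typeJ.
rewrite (eq_bigr (fun _ => conj_sum F p0)) => [|p /eqP]; last exact: class_const.
by rewrite mulr_natr -sumr_const; apply: eq_bigl => p; rewrite inE.
Qed.

End ExpectationByType.

Lemma is_partition_single n : (0 < n)%N -> is_partition n [:: n].
Proof. by move=> n_gt0; rewrite /is_partition /= n_gt0 addn0 eqxx. Qed.

Lemma is_partition_no_small_parts n la K : (0 < n)%N -> is_partition n la ->
  (forall i, (1 <= i <= K)%N -> mult i la = 0%N) -> (K < n)%N.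
Proof.
move=> n_gt0 /and3P [_ la_gt0 /eqP sum_la] no_small.
case: la sum_la la_gt0 no_small => [|x l]; first by move=> sum0; rewrite -sum0 in n_gt0.
move=> /= sum_la /andP [x_gt0 _] no_small; rewrite ltnNge; apply/negP => le_nK.
have le_xK : (x <= K)%N by rewrite (leq_trans _ le_nK) // -sum_la leq_addr.
by have := no_small x; rewrite x_gt0 le_xK /mult /= eqxx => /(_ isT).
Qed.

Local Open Scope ring_scope.

Theorem proposition5p7 (R : realFieldType) (d k n : nat) (f : {perm 'I_n} -> R) :
  (1 <= n)%N -> lin_comb_pp k f ->
  (forall la mu : seq nat, is_partition n la -> is_partition n mu ->
     (forall i, (1 <= i <= k * d)%N -> mult i la = mult i mu) ->
     Exp_ct la (fun pi => f pi ^+ d) = Exp_ct mu (fun pi => f pi ^+ d)) /\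
  (forall la : seq nat, is_partition n la ->
     (forall i, (1 <= i <= k * d)%N -> mult i la = 0%N) ->
     Exp_ct la (fun pi => f pi ^+ d) = Exp_ct [:: n] (fun pi => f pi ^+ d)).
Proof.
move=> n_gt0 lin_f; set F := fun pi => f pi ^+ d.
have span_F : ext_span (k * d) F := ext_spanX d (lin_comb_pp_ext_span lin_f).
have conj_sum_eq (p q : {perm 'I_n}) :
    (forall i, (0 < i <= k * d)%N -> mult i (cycle_type p) = mult i (cycle_type q)) ->
    conj_sum F p = conj_sum F q.
  by move=> pq; apply/(conj_sum_same_cyc_pts span_F)/same_cyc_pts_mult.
have Exp_typeE la p : cycle_type p = la -> Exp_ct la F = conj_sum F p / #|{perm 'I_n}|%:R.
  move=> type_p; apply: Exp_ct_conj_sum => // q type_q.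
  by apply: conj_sum_eq => i _; rewrite type_q type_p.
have same_mult la mu : is_partition n la -> is_partition n mu ->
    (forall i, (1 <= i <= k * d)%N -> mult i la = mult i mu) -> Exp_ct la F = Exp_ct mu F.
  move=> /exists_perm_cycle_type [p type_p] /exists_perm_cycle_type [q type_q] la_mu.
  by rewrite (Exp_typeE _ _ type_p) (Exp_typeE _ _ type_q) (conj_sum_eq p q) ?type_p ?type_q.
split=> // la la_part no_small; apply: same_mult => //; first exact: is_partition_single.
have lt_kd_n := is_partition_no_small_parts n_gt0 la_part no_small.
move=> i /andP [i_gt0 le_i_kd]; rewrite no_small ?i_gt0 // /mult /=.
by case: eqP => // eq_ni; move: lt_kd_n; rewrite eq_ni ltnNge le_i_kd.
Qed.
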